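(* Let $n\ge 2$, $\gamma_1,\dots,\gamma_n>0$, and let $\mathcal{I}\subseteq\{1,\dots,n\}$. For $i\in\mathcal{I}$, let $H_i$ be a dynamic system $\dot x_i=f_i(x_i,u_i)$, $y_i=h_i(x_i)$ ($x_i\in\mathbb{R}^{m_i}$, $u_i,y_i\in\mathbb{R}$) with a $C^1$ function $V_i$ satisfying $\nabla V_i(x_i)\cdot f_i(x_i,u_i)\le -h_i(x_i)^2+\gamma_iu_ih_i(x_i)$ for all $x_i,u_i$. For $i\notin\mathcal{I}$, let $H_i$ be a static (possibly time-varying) map $y_i=\phi_i(t,u_i)$ satisfying $0\le -y_i^2+\gamma_iu_iy_i$ for all $t,u_i$. Consider the interconnection $u_1=-y_n$, $u_i=y_{i-1}$ ($i=2,\dots,n$), $y=(y_1,\dots,y_n)$, and suppose the resulting closed loop is well-defined. If $\cos(\pi/n)(\gamma_1\cdots\gamma_n)^{1/n}<1$, then there exist $d_i>0$ ($i\in\mathcal{I}$) and $\epsilon>0$ such that $V=\sum_{i\in\mathcal{I}}d_iV_i$ satisfies $\dot V\le-\epsilon|y|^2$ along the closed-loop dynamics. *)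

From HB Require Import structures.
From mathcomp Require Import all_boot all_order all_algebra.
From mathcomp Require Import all_classical all_reals all_analysis.
Set Implicit Arguments. Unset Strict Implicit. Unset Printing Implicit Defensive.
Import Order.TTheory GRing.Theory Num.Theory.
Import numFieldNormedType.Exports.
Local Open Scope ring_scope.

(* Subsystems are indexed by 'I_n = {0,...,n-1} (paper index i+1).
   Interconnection: u_1 = - y_n, u_i = y_(i-1) (i = 2..n).
   ord_pred i is the cyclic predecessor of i in 'I_n (ord_pred 0 = n-1). *)
Definition loop_input {R : ringType} {n : nat} (y : 'I_n -> R) (i : 'I_n) : R :=
  if (i : nat) == 0%N then - y (ord_pred i) else y (ord_pred i).

Definition closed_loop {R : realType} {n : nat} (I : {set 'I_n}) (m : 'I_n -> nat)
    (h : forall i, 'rV[R]_(m i) -> R) (phi : 'I_n -> R -> R -> R)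
    (t : R) (x : forall i, 'rV[R]_(m i)) (y : 'I_n -> R) : Prop :=
  forall i : 'I_n,
    (i \in I -> y i = h i (x i)) /\ (i \notin I -> y i = phi i t (loop_input y i)).

From HB Require Import structures.
From mathcomp Require Import all_boot all_order all_algebra.
From mathcomp Require Import all_classical all_reals all_analysis.
From mathcomp Require Import ring lra.
Import Order.TTheory GRing.Theory Num.Theory.
Import numFieldNormedType.Exports.
Local Open Scope ring_scope.

(* Choose a_i > 0 with gamma_i a_(i-1) = g a_i (cyclically), where g is the
   geometric mean of the gains. With d_i = a_i^-2 and z_i = y_i / a_i the
   weighted supply rates sum to - |z|^2 + g Q(z), where Q(z) = sum_i u_i z_i
   is the coupling form of the negative-feedback ring, i.e. the symmetric part
   of the anticyclic shift. Its largest eigenvalue is cos (pi / n): a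
   ground-state transform with the positive eigenvector sin ((j + 1/2) pi / n)
   gives Q(z) <= cos (pi / n) |z|^2. So the sum is at most
   - (1 - g cos (pi / n)) |z|^2, negative definite under the small-gain
   condition; the dissipation inequalities bound the dynamic terms by their
   supply rates, and the sector conditions make the static ones nonnegative. *)

Lemma sqr_sum_le_weighted {R : realFieldType} (I : finType) (p x : I -> R) :
  (forall i, 0 < p i) ->
  (\sum_i x i) ^+ 2 <= (\sum_i (p i)^-1) * \sum_i p i * x i ^+ 2.
Proof.
move=> p_gt0; set X := \sum_i x i; set P := \sum_i (p i)^-1.
set A := \sum_i p i * x i ^+ 2.
have pV_ge0 i : 0 <= (p i)^-1 by rewrite invr_ge0 ltW.
have [P0|P_gt0] : P = 0 \/ 0 < P.
  by have : 0 <= P := sumr_ge0 _ (fun i _ => pV_ge0 i); rewrite le0r => /orP[/eqP|]; auto.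
  suff -> : X = 0 by rewrite P0 expr0n mul0r.
  apply: big1 => i _.
  have /eqP := @psumr_eq0P _ _ predT _ (fun j _ => pV_ge0 j) P0 i isT.
  by rewrite invr_eq0 gt_eqF.
have : 0 <= \sum_i p i * (P * x i - X / p i) ^+ 2.
  by apply: sumr_ge0 => i _; rewrite mulr_ge0 ?sqr_ge0 ?ltW.
have -> : \sum_i p i * (P * x i - X / p i) ^+ 2 = P * (P * A - X ^+ 2).
  transitivity (\sum_i (P ^+ 2 * (p i * x i ^+ 2) - (2 * P * X) * x i + X ^+ 2 * (p i)^-1)).
    by apply: eq_bigr => i _; field; rewrite gt_eqF.
  rewrite big_split sumrB /= -!mulr_sumr -/X -/P -/A; ring.
by rewrite pmulr_rge0 // subr_ge0.
Qed.

Section Anticyclic.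
Context {R : comPzRingType} (N : nat).
Implicit Types a b z : nat -> R.

(* Sequences z_0, ..., z_N extended anti-periodically, z_(-1) = - z_N and
   z_(N+1) = - z_0, as in the loop u_1 = - y_n; anticyclic z z is the
   coupling form of the loop. *)
Definition antiprev z j := if j == 0%N then - z N else z j.-1.
Definition antinext z j := if j == N then - z 0%N else z j.+1.
Definition anticyclic a b := \sum_(j < N) a j * b j.+1 - a N * b 0%N.

Lemma sum_antiprev_mul a b : \sum_(j < N.+1) antiprev a j * b j = anticyclic a b.
Proof. by rewrite big_ord_recl /antiprev /= addrC mulNr. Qed.

Lemma sum_antinext_mul a b : \sum_(j < N.+1) antinext a j * b j = anticyclic b a.
Proof.
rewrite big_ord_recr /antinext /= eqxx mulNr mulrC.
by congr (_ - _); apply: eq_bigr => j _; rewrite ltn_eqF // mulrC.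
Qed.

End Anticyclic.

Lemma sqr_sub_le_path_energy {R : realFieldType} (N : nat) (p x : nat -> R) :
  (forall j, (j < N)%N -> 0 < p j) ->
  (x 0%N - x N) ^+ 2 <= (\sum_(j < N) (p j)^-1) * \sum_(j < N) p j * (x j - x j.+1) ^+ 2.
Proof.
move=> p_gt0; have -> : x 0%N - x N = \sum_(j < N) (x j - x j.+1).
  rewrite -(big_mkord xpredT (fun j => x j - x j.+1)).
  by rewrite (telescope_sumr_eq (fun k => - x k)) // => [|k _]; rewrite opprK addrC.
exact: sqr_sum_le_weighted (fun j : 'I_N => p_gt0 j (ltn_ord j)).
Qed.

(* Ground-state transform z = s w: the form splits into a diagonal part,
   bounded through the hypothesis on the neighbours of s, minus the sum of
   s_j s_(j+1) (w_j - w_(j+1))^2, and Cauchy-Schwarz along the path shows that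
   this sum pays for the wrap-around term s_0 s_N (w_0 - w_N)^2. *)
Lemma anticyclic_le_ground_state {R : realFieldType} (N : nat) (c : R) (s z : nat -> R) :
  (forall j, (j <= N)%N -> 0 < s j) ->
  (forall j, (j <= N)%N -> antiprev N s j + antinext N s j <= 2 * c * s j) ->
  s 0%N * s N * \sum_(j < N) (s j * s j.+1)^-1 <= 1 ->
  anticyclic N z z <= c * \sum_(j < N.+1) z j ^+ 2.
Proof.
move=> s_gt0 s_super s_sum.
pose w j := z j / s j.
have zE j : (j <= N)%N -> z j = s j * w j.
  by move=> jN; rewrite /w mulrC divfK // gt_eqF ?s_gt0.
pose sw2 j := s j * w j ^+ 2.
have diag : anticyclic N s sw2 + anticyclic N sw2 s <= 2 * c * \sum_(j < N.+1) z j ^+ 2.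
  rewrite -sum_antiprev_mul -sum_antinext_mul -big_split mulr_sumr /=.
  apply: ler_sum => j _; have jN : (j <= N)%N := ltn_ord j.
  have -> : z j ^+ 2 = s j * sw2 j by rewrite zE // /sw2; ring.
  rewrite -mulrDl mulrA ler_wpM2r ?s_super //.
  by rewrite /sw2 mulr_ge0 ?sqr_ge0 ?ltW ?s_gt0.
have s0N_gt0 : 0 < s 0%N * s N by rewrite mulr_gt0 ?s_gt0.
have gap : s 0%N * s N * (w 0%N - w N) ^+ 2
    <= \sum_(j < N) s j * s j.+1 * (w j - w j.+1) ^+ 2.
  have ss_gt0 j : (j < N)%N -> 0 < s j * s j.+1 by move=> jN; rewrite mulr_gt0 ?s_gt0 // ltnW.
  have path := sqr_sub_le_path_energy _ _ w ss_gt0.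
  have D_ge0 : 0 <= \sum_(j < N) s j * s j.+1 * (w j - w j.+1) ^+ 2.
    by apply: sumr_ge0 => j _; rewrite mulr_ge0 ?sqr_ge0 ?ltW ?ss_gt0.
  apply: le_trans (ler_wpM2l (ltW s0N_gt0) path) _.
  by rewrite mulrA ler_piMl.
have path_part : 2 * \sum_(j < N) z j * z j.+1 = \sum_(j < N) s j * sw2 j.+1
    + \sum_(j < N) sw2 j * s j.+1 - \sum_(j < N) s j * s j.+1 * (w j - w j.+1) ^+ 2.
  rewrite -big_split -sumrB mulr_sumr; apply: eq_bigr => j _.
  by rewrite /sw2 /= !zE ?(ltnW (ltn_ord j)) ?(ltn_ord j) //; ring.
have wrap_part : 2 * (z N * z 0%N)
    = s N * sw2 0%N + sw2 N * s 0%N - s 0%N * s N * (w 0%N - w N) ^+ 2.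
  by rewrite /sw2 !zE //; ring.
move: diag; rewrite /anticyclic; lra.
Qed.

Section Trigonometry.
Context {R : realType}.
Implicit Types x y t : R.

Lemma sin_piB x : sin (pi - x) = sin x.
Proof. by rewrite sinB sinpi cospi; ring. Qed.

Lemma cos_piB x : cos (pi - x) = - cos x.
Proof. by rewrite cosB sinpi cospi; ring. Qed.

Lemma sin_piD x : sin (pi + x) = - sin x.
Proof. by rewrite sinD sinpi cospi; ring. Qed.

Lemma sinB_add_sinD x t : sin (x - t) + sin (x + t) = 2 * cos t * sin x.
Proof. by rewrite sinB sinD; ring. Qed.

Lemma cot_sub x y : sin x != 0 -> sin y != 0 ->
  cos x / sin x - cos y / sin y = sin (y - x) / (sin x * sin y).
Proof. by move=> sx sy; rewrite sinB; field; rewrite sx sy. Qed.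

End Trigonometry.

(* At x = 0, ..., N: the positive eigenvector of the form anticyclic z z for
   its largest eigenvalue cos (pi / (N+1)). *)
Definition anticyclic_mode {R : realType} (N : nat) (x : R) : R :=
  sin ((x + 2^-1) * (pi / N.+1%:R)).

Section AnticyclicMode.
Context {R : realType} (N : nat).
Hypothesis N_gt0 : (0 < N)%N.
Let theta : R := pi / N.+1%:R.
Let S : R -> R := anticyclic_mode N.

Let theta_gt0 : 0 < theta.
Proof. by rewrite divr_gt0 ?pi_gt0. Qed.

Let theta_lt_pi : theta < pi.
Proof. by rewrite ltr_pdivrMr ?ltr0n // ltr_pMr ?pi_gt0 // ltr1n ltnS. Qed.

Let S_last_arg : (N%:R + 2^-1) * theta = pi - theta / 2.
Proof. by rewrite /theta -natr1; field; rewrite nat1r pnatr_eq0. Qed.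

Let S0 : S 0 = sin (theta / 2).
Proof. by rewrite /S /anticyclic_mode add0r mulrC. Qed.

Let S_last : S N%:R = sin (theta / 2).
Proof. by rewrite /S /anticyclic_mode -/theta S_last_arg sin_piB. Qed.

Lemma anticyclic_mode_gt0 j : (j <= N)%N -> 0 < S j%:R.
Proof.
move=> jN; rewrite /S /anticyclic_mode -/theta; apply: sin_gt0_pi; apply/andP; split.
  by rewrite mulr_gt0 // ltr_wpDl ?invr_gt0.
apply: (@le_lt_trans _ _ ((N%:R + 2^-1) * theta)).
  by rewrite ler_wpM2r ?(ltW theta_gt0) // lerD2r ler_nat.
by rewrite S_last_arg ltrBlDr ltrDl divr_gt0.
Qed.

Let S_neighbours x : S (x - 1) + S (x + 1) = 2 * cos theta * S x.
Proof.
by rewrite /S /anticyclic_mode -/theta -sinB_add_sinD; congr (sin _ + sin _); ring.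
Qed.

Lemma anticyclic_mode_neighbours j : (j <= N)%N ->
  antiprev N (fun k => S k%:R) j + antinext N (fun k => S k%:R) j
  = 2 * cos theta * S j%:R.
Proof.
have S_before_first : S (0 - 1) = - S N%:R.
  by rewrite S_last /S /anticyclic_mode -/theta -sinN; congr sin; field.
have S_after_last : S (N%:R + 1) = - S 0.
  rewrite S0 -sin_piD /S /anticyclic_mode; congr sin.
  by rewrite /theta -[N.+1%:R]natr1; field; rewrite natr1 pnatr_eq0.
move=> jN; rewrite -S_neighbours /antiprev /antinext; case: j jN => [|k] kN.
  by rewrite /= eq_sym (gtn_eqF N_gt0) -S_before_first !add0r.
rewrite -[k.+1%:R]natr1 addrK /=; case: eqP => [kN1|_]; last by rewrite !natr1.
by rewrite -S_after_last -kN1 !natr1.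
Qed.

Lemma anticyclic_mode_inv_sum :
  S 0 * S N%:R * \sum_(j < N) (S j%:R * S j.+1%:R)^-1 = 1.
Proof.
pose arg (j : nat) := (j%:R + 2^-1) * theta.
pose cot (x : R) := cos x / sin x.
have sin_theta : sin theta = 2 * sin (theta / 2) * cos (theta / 2).
  have theta_double : (theta / 2) *+ 2 = theta by rewrite -mulr_natr divfK ?pnatr_eq0.
  by rewrite -{1}theta_double sin_mulr2n -mulr_natl; ring.
have sin_theta_gt0 : 0 < sin theta by rewrite sin_gt0_pi ?theta_gt0.
have cos_half_neq0 : cos (theta / 2) != 0.
  by apply: contraTneq sin_theta_gt0 => cos0; rewrite sin_theta cos0 mulr0 ltxx.
(* 1 / (sin a sin b) = (cot a - cot b) / sin (b - a) makes the sum telescope. *)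
have inv_SS j : (j < N)%N -> (S j%:R * S j.+1%:R)^-1 = (cot (arg j) - cot (arg j.+1)) / sin theta.
  move=> jN; have Sj := anticyclic_mode_gt0 _ (ltnW jN); have Sj1 := anticyclic_mode_gt0 _ jN.
  rewrite /cot cot_sub ?gt_eqF //.
  rewrite (_ : arg j.+1 - arg j = theta); last by rewrite /arg -natr1; ring.
  by rewrite /S /anticyclic_mode -/theta; field; rewrite !gt_eqF.
rewrite (eq_bigr _ (fun (j : 'I_N) _ => inv_SS j (ltn_ord j))) -mulr_suml.
rewrite -(big_mkord xpredT (fun j => cot (arg j) - cot (arg j.+1))).
rewrite (telescope_sumr_eq (fun k => - cot (arg k))) // => [|k _]; last first.
  by rewrite opprK addrC.
have arg0 : arg 0%N = theta / 2 by rewrite /arg add0r mulrC.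
have argN : arg N = pi - theta / 2 := S_last_arg.
have sin_half_gt0 : 0 < sin (theta / 2).
  by rewrite -S0; exact: anticyclic_mode_gt0 _ (leq0n N).
rewrite opprK addrC /cot arg0 argN cos_piB sin_piB S0 S_last sin_theta.
by field; rewrite cos_half_neq0 gt_eqF.
Qed.

Lemma anticyclic_le_cos (z : nat -> R) :
  anticyclic N z z <= cos theta * \sum_(j < N.+1) z j ^+ 2.
Proof.
apply: (@anticyclic_le_ground_state _ _ _ (fun j => S j%:R)).
- exact: anticyclic_mode_gt0.
- by move=> j jN; rewrite anticyclic_mode_neighbours.
- by rewrite anticyclic_mode_inv_sum.
Qed.

End AnticyclicMode.

Lemma val_ord_pred (N : nat) (i : 'I_N.+1) :
  ord_pred i = (if i == 0%N :> nat then N else i.-1) :> nat.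
Proof.
case: i => [[|k] k_lt] /=; first by rewrite modn_small.
by rewrite modnDr modn_small // ltnW.
Qed.

Lemma loop_input_antiprev {R : comNzRingType} (N : nat) (y : 'I_N.+1 -> R) (i : 'I_N.+1) :
  loop_input y i = antiprev N (fun j => y (inord j)) i.
Proof.
rewrite /loop_input /antiprev.
have -> : ord_pred i = inord (if i == 0%N :> nat then N else i.-1).
  apply: ord_inj; rewrite val_ord_pred inordK //; case: ifP => // _.
  by rewrite ltnS (leq_trans (leq_pred _)) // -ltnS.
by case: ifP => ->.
Qed.

Lemma loop_form_le_cos {R : realType} {n : nat} (y : 'I_n -> R) : (1 < n)%N ->
  \sum_i loop_input y i * y i <= cos (pi / n%:R) * \sum_i y i ^+ 2.
Proof.
case: n y => [//|N] y; rewrite ltnS => N_gt0; pose z j := y (inord j).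
have -> : \sum_i loop_input y i * y i = anticyclic N z z.
  by rewrite -sum_antiprev_mul; apply: eq_bigr => i _; rewrite loop_input_antiprev /z inord_val.
have -> : \sum_i y i ^+ 2 = \sum_(j < N.+1) z j ^+ 2.
  by apply: eq_bigr => i _; rewrite /z inord_val.
exact: anticyclic_le_cos.
Qed.

Lemma powR_invn_exprn {R : realType} (x : R) (n : nat) : 0 <= x -> (0 < n)%N ->
  powR x n%:R^-1 ^+ n = x.
Proof.
move=> x_ge0 n_gt0; rewrite -powR_mulrn ?powR_ge0 // -powRrM mulVf ?powRr1 //.
by rewrite pnatr_eq0 -lt0n.
Qed.

Lemma loop_gain_rescaling {R : realType} {n : nat} (gamma : 'I_n -> R) :
  (forall i, 0 < gamma i) ->
  exists2 a : 'I_n -> R, (forall i, 0 < a i) &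
    forall i, gamma i * a (ord_pred i) = powR (\prod_i gamma i) n%:R^-1 * a i.
Proof.
case: n gamma => [|N] gamma gamma_gt0; first by exists (fun=> 1) => [|[]].
set g := powR _ _; pose G k := gamma (inord k).
have g_gt0 : 0 < g by rewrite powR_gt0 // prodr_gt0.
pose a k := (\prod_(1 <= l < k.+1) G l) / g ^+ k.
have a_gt0 k : 0 < a k.
  by rewrite divr_gt0 ?exprn_gt0 //; apply: prodr_gt0 => l _; exact: gamma_gt0.
have prod_G : \prod_(0 <= l < N.+1) G l = g ^+ N.+1.
  rewrite powR_invn_exprn ?prodr_ge0 // => [|i _]; last exact: ltW.
  by rewrite big_mkord; apply: eq_bigr => i _; rewrite /G inord_val.
exists (fun i => a i) => // i; rewrite val_ord_pred.
have -> : gamma i = G i by rewrite /G inord_val.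
case: i => [[|k] _] /=.
  rewrite /a [in RHS]big_geq // mulrA -big_ltn // prod_G exprSr.
  by field; rewrite expf_neq0 ?gt_eqF.
by rewrite /a [in RHS]big_nat_recr //= exprSr; field; rewrite expf_neq0 ?gt_eqF.
Qed.

Lemma loop_supply_rate_le {R : realType} {n : nat} (gamma : 'I_n -> R) :
  (1 < n)%N -> (forall i, 0 < gamma i) ->
  cos (pi / n%:R) * powR (\prod_i gamma i) n%:R^-1 < 1 ->
  exists2 d : 'I_n -> R, (forall i, 0 < d i) &
  exists2 eps : R, 0 < eps & forall y : 'I_n -> R,
    \sum_i d i * (- y i ^+ 2 + gamma i * loop_input y i * y i) <= - eps * \sum_i y i ^+ 2.
Proof.
move=> n_gt1 gamma_gt0; set c := cos _; set g := powR _ _ => small_gain.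
have [a a_gt0 aE] := loop_gain_rescaling gamma gamma_gt0; rewrite -/g in aE.
pose M := \sum_i a i ^+ 2.
have a2_le_M i : a i ^+ 2 <= M.
  by rewrite /M (bigD1 i) //= lerDl sumr_ge0 // => j _; exact: sqr_ge0.
have M_gt0 : 0 < M.
  by apply: lt_le_trans (a2_le_M (Ordinal (ltnW n_gt1))); rewrite exprn_gt0.
exists (fun i => (a i ^+ 2)^-1) => [i|]; first by rewrite invr_gt0 exprn_gt0.
exists ((1 - c * g) / M); first by rewrite divr_gt0 // subr_gt0.
move=> y; pose z i := y i / a i.
have yE i : y i = a i * z i by rewrite /z mulrC divfK ?gt_eqF.
have termE i : (a i ^+ 2)^-1 * (- y i ^+ 2 + gamma i * loop_input y i * y i)
    = - z i ^+ 2 + g * (loop_input z i * z i).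
  have -> : loop_input y i = a (ord_pred i) * loop_input z i.
    by rewrite /loop_input !yE; case: ifP => _; rewrite ?mulrN.
  by rewrite yE (mulrA (gamma i)) aE; field; rewrite gt_eqF.
rewrite (eq_bigr _ (fun i _ => termE i)) big_split /= sumrN -mulr_sumr.
have form := loop_form_le_cos z n_gt1; rewrite -/c in form.
have zM : (\sum_i y i ^+ 2) / M <= \sum_i z i ^+ 2.
  rewrite mulr_suml; apply: ler_sum => i _.
  by rewrite yE exprMn ler_pdivrMr // [X in X <= _]mulrC ler_wpM2l ?sqr_ge0.
have g_ge0 : 0 <= g by rewrite powR_ge0.
have gap_ge0 : 0 <= 1 - c * g by rewrite subr_ge0 ltW.
have := ler_wpM2l g_ge0 form; have := ler_wpM2l gap_ge0 zM.
rewrite mulrA mulNr mulrAC -mulrA; nra.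
Qed.

Theorem mainTheorem4 (R : realType) (n : nat) (hn : (2 <= n)%N)
  (gamma : 'I_n -> R) (hgamma : forall i, 0 < gamma i)
  (I : {set 'I_n}) (m : 'I_n -> nat)
  (f : forall i, 'rV[R]_(m i) -> R -> 'rV[R]_(m i))
  (h : forall i, 'rV[R]_(m i) -> R)
  (V : forall i, 'rV[R]_(m i) -> R)
  (phi : 'I_n -> R -> R -> R)
  (* V_i is C^1 for i in I *)
  (hVd : forall i, i \in I -> forall x, differentiable (V i) x)
  (hVc : forall i, i \in I -> forall v, continuous (fun x => 'D_v (V i) x))
  (* dissipation inequality for the dynamic subsystems *)
  (hdiss : forall i, i \in I -> forall (x : 'rV[R]_(m i)) (u : R),
      'D_(f i x u) (V i) x <= - (h i x) ^+ 2 + gamma i * u * h i x)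
  (* sector condition for the static subsystems *)
  (hstat : forall i, i \notin I -> forall (t u : R),
      0 <= - (phi i t u) ^+ 2 + gamma i * u * phi i t u)
  (hgain : cos (pi / n%:R) * powR (\prod_(i < n) gamma i) (n%:R^-1) < 1) :
  exists d : 'I_n -> R, (forall i, i \in I -> 0 < d i) /\
  exists eps : R, 0 < eps /\
    forall (t : R) (x : forall i, 'rV[R]_(m i)) (y : 'I_n -> R),
      closed_loop I h phi t x y ->
      \sum_(i in I) d i * 'D_(f i (x i) (loop_input y i)) (V i) (x i)
        <= - eps * \sum_(i < n) y i ^+ 2.
Proof.
have [d d_gt0 [eps eps_gt0 supply]] := loop_supply_rate_le gamma hn hgamma hgain.
exists d; split=> [i _|]; first exact: d_gt0.
exists eps; split=> // t x y loop; apply: le_trans (supply y).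
rewrite [leRHS](bigID (mem I)) /= ler_wpDr //.
  apply: sumr_ge0 => i iNI; rewrite mulr_ge0 ?(ltW (d_gt0 i)) // (loop i).2 //.
  exact: hstat.
apply: ler_sum => i iI; apply: ler_wpM2l; first exact: ltW.
by rewrite (loop i).1 //; exact: hdiss.
Qed.
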